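(* For every bounded continuous $f:\mathbb{R}^d\to\mathbb{C}$ and every $\epsilon>0$ there exists $n_0\ge1$ such that for every sequence $\{(R_n,B_n)\}_{n=1}^\infty\subseteq\mathcal{D}_d$, $$\Big|\int f\,d\mu_{n_0}-\int f\,d\mu\Big|<\epsilon,$$ where $\mu_n=\delta_{R_1^{-1}B_1}*\delta_{(R_2R_1)^{-1}B_2}*\cdots*\delta_{(R_n\cdots R_1)^{-1}B_n}$ and $\mu$ is the weak limit of $\mu_n$.
   Context: $\mathcal{D}_d$ is the set of pairs $(R,B)$ with $R=\mathrm{diag}(m_1,\dots,m_d)$, $m_1,\dots,m_d\ge2$ integers, and $B$ a nonempty subset of $\{0,\dots,m_1-1\}\times\cdots\times\{0,\dots,m_d-1\}$. For finite $A$, $\delta_A=\frac{1}{\#A}\sum_{a\in A}\delta_a$. For every sequence in $\mathcal{D}_d$ the measures $\mu_n$ converge weakly to a Borel probability measure $\mu$ (the infinite convolution). *)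

From HB Require Import structures.
From mathcomp Require Import all_boot all_order all_algebra.
From mathcomp Require Import all_classical all_reals all_analysis.
From mathcomp.real_closed Require Import complex.

Set Implicit Arguments.
Unset Strict Implicit.
Unset Printing Implicit Defensive.

Import Order.TTheory GRing.Theory Num.Theory.
Import numFieldNormedType.Exports.
Local Open Scope classical_set_scope.
Local Open Scope ring_scope.

(* R^d is represented for measure theory by [d.-tuple R] (its canonical
   sigma-algebra is the product sigma-algebra of the Borel sets of R, i.e.
   the Borel sigma-algebra of R^d), and for topology by ['rV[R]_d]
   (the normed space R^d); [tup_of_row] is the identification. *)
Definition tup_of_row (R : realType) (d : nat) (x : 'rV[R]_d) : d.-tuple R :=
  [tuple x ord0 i | i < d].

Definition bdd_cont_R (R : realType) (d : nat) (g : d.-tuple R -> R) : Prop :=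
  (exists M : R, forall x, `|g x| <= M) /\ continuous (g \o @tup_of_row R d).

(* A complex-valued function on R^d is bounded and continuous
   (C carries the topology of R^2, so continuity of f is continuity of its
   real and imaginary parts). *)
Definition bdd_cont_C (R : realType) (d : nat) (f : d.-tuple R -> R[i]) : Prop :=
  (exists M : R, forall x, Normc.normc (f x) <= M) /\
  continuous ((fun x => complex.Re (f x)) \o @tup_of_row R d) /\
  continuous ((fun x => complex.Im (f x)) \o @tup_of_row R d).

Definition cintegral (R : realType) (d : nat)
    (mu : probability (d.-tuple R) R) (f : d.-tuple R -> R[i]) : R[i] :=
  Complex (Rintegral mu setT (fun x => complex.Re (f x)))
          (Rintegral mu setT (fun x => complex.Im (f x))).

(* A sequence in D_d, indexed from 0: the k-th pair (R_k, B_k) is given by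
   R_k = diag (m k 0, ..., m k (d-1)) and the digit set B_k (a duplicate-free
   nonempty list of integer vectors b with 0 <= b_i < m k i). *)
Definition in_Dd (d : nat) (m : nat -> 'I_d -> nat) (B : nat -> seq (d.-tuple nat))
  : Prop :=
  forall k, (forall i, (2 <= m k i)%N) /\ B k != [::] /\ uniq (B k) /\
            all (fun b : d.-tuple nat => [forall i, (tnth b i < m k i)%N]) (B k).

(* (R_k ... R_0)^{-1} b, coordinatewise b_i / (m 0 i * ... * m k i). *)
Definition scaled_digit (R : realType) (d : nat) (m : nat -> 'I_d -> nat) (k : nat)
    (b : d.-tuple nat) : d.-tuple R :=
  [tuple (tnth b i)%:R / (\prod_(j < k.+1) m j i)%:R | i < d].

Definition tup_add (R : realType) (d : nat) (x y : d.-tuple R) : d.-tuple R :=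
  [tuple tnth x i + tnth y i | i < d].

(* The support of mu_n = delta_{(R_0)^{-1}B_0} * ... * delta_{(R_{n-1}...R_0)^{-1}B_{n-1}},
   listed with multiplicity: all sums  sum_{k<n} (R_k...R_0)^{-1} b_k
   with b_k in B_k.  mu_n is the uniform probability on this list
   (with multiplicity), which is exactly that convolution. *)
Fixpoint conv_points (R : realType) (d : nat) (m : nat -> 'I_d -> nat)
    (B : nat -> seq (d.-tuple nat)) (n : nat) : seq (d.-tuple R) :=
  match n with
  | 0 => [:: [tuple (0 : R) | i < d]]
  | n'.+1 => [seq tup_add x (scaled_digit R m n' b)
               | x <- conv_points R m B n', b <- B n']
  end.

Definition int_mu_n (R : realType) (V : unitRingType) (d : nat)
    (m : nat -> 'I_d -> nat) (B : nat -> seq (d.-tuple nat)) (n : nat)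
    (g : d.-tuple R -> V) : V :=
  (size (conv_points R m B n))%:R^-1 * \sum_(x <- conv_points R m B n) g x.

Definition weak_limit (R : realType) (d : nat) (m : nat -> 'I_d -> nat)
    (B : nat -> seq (d.-tuple nat)) (mu : probability (d.-tuple R) R) : Prop :=
  forall g : d.-tuple R -> R, bdd_cont_R g ->
    (fun n => @int_mu_n R R d m B n g) @ \oo --> Rintegral mu setT g.

(* Write mu_n for the uniform measure on [conv_points m B n].  Every point of
   mu_(n0+k) is x + t with x a point of mu_n0, hence in the unit cube, and
   0 <= t_i <= 1 / (m_0i ... m_(n0-1)i) <= 2^-n0.  So if del is a modulus of
   uniform continuity of g on a neighbourhood of the unit cube and
   2^-n0 < del, every average of g against mu_(n0+k) stays within e of its
   average against mu_n0, and so does the limit, the integral of g against mu.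
   The index n0 depends on g and e only, never on the digit sequence.  Apply
   this to the real and imaginary parts of f. *)
From HB Require Import structures.
From mathcomp Require Import all_boot all_order all_algebra.
From mathcomp Require Import all_classical all_reals all_analysis.
From mathcomp.real_closed Require Import complex.
From mathcomp Require Import ring lra.
Import Order.TTheory GRing.Theory Num.Theory.
Import numFieldNormedType.Exports.
Set Implicit Arguments.
Unset Strict Implicit.
Local Open Scope classical_set_scope.
Local Open Scope ring_scope.

Section ComplexNorm.
Variable R : rcfType.

Lemma sum_complexE (T : Type) (s : seq T) (h : T -> R[i]) :
  \sum_(x <- s) h x =
  Complex (\sum_(x <- s) complex.Re (h x)) (\sum_(x <- s) complex.Im (h x)).
Proof.
elim: s => [|x s IH]; first by rewrite !big_nil.
by rewrite !big_cons IH; case: (h x).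
Qed.

Lemma natrV_mul_complex (n : nat) (a b : R) :
  (n%:R : R[i])^-1 * Complex a b = Complex (n%:R^-1 * a) (n%:R^-1 * b).
Proof.
rewrite -(rmorph_nat (real_complex R)) -fmorphV.
by apply/eqP; rewrite eq_complex /= !mul0r subr0 addr0 !eqxx.
Qed.

Lemma normc_complex_le (a b : R) : Normc.normc (Complex a b) <= `|a| + `|b|.
Proof.
rewrite /= -(ger0_norm (addr_ge0 (normr_ge0 a) (normr_ge0 b))) -sqrtr_sqr.
rewrite ler_sqrt ?sqr_ge0 // sqrrD !real_normK ?num_real //.
have := mulr_ge0 (normr_ge0 a) (normr_ge0 b); lra.
Qed.

Lemma norm_Re_le_normc (z : R[i]) : `|complex.Re z| <= Normc.normc z.
Proof.
case: z => a b /=; rewrite -sqrtr_sqr ler_sqrt ?addr_ge0 ?sqr_ge0 //.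
by rewrite lerDl sqr_ge0.
Qed.

Lemma norm_Im_le_normc (z : R[i]) : `|complex.Im z| <= Normc.normc z.
Proof.
case: z => a b /=; rewrite -sqrtr_sqr ler_sqrt ?addr_ge0 ?sqr_ge0 //.
by rewrite lerDr sqr_ge0.
Qed.

End ComplexNorm.

Lemma int_mu_n_complex (R : realType) d m B n (f : d.-tuple R -> R[i]) :
  int_mu_n m B n f =
  Complex (int_mu_n m B n (fun x => complex.Re (f x)))
          (int_mu_n m B n (fun x => complex.Im (f x))).
Proof. by rewrite /int_mu_n sum_complexE natrV_mul_complex. Qed.

Lemma bdd_cont_C_Re (R : realType) d (f : d.-tuple R -> R[i]) :
  bdd_cont_C f -> bdd_cont_R (fun x => complex.Re (f x)).
Proof.
move=> [[M fM] [cRe _]]; split=> //.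
by exists M => x; apply: le_trans (norm_Re_le_normc _) (fM x).
Qed.

Lemma bdd_cont_C_Im (R : realType) d (f : d.-tuple R -> R[i]) :
  bdd_cont_C f -> bdd_cont_R (fun x => complex.Im (f x)).
Proof.
move=> [[M fM] [_ cIm]]; split=> //.
by exists M => x; apply: le_trans (norm_Im_le_normc _) (fM x).
Qed.

Lemma sum_const_seq (R : pzSemiRingType) (T : Type) (s : seq T) (c : R) :
  \sum_(x <- s) c = (size s)%:R * c.
Proof. by rewrite big_const_seq count_predT iter_addr_0 mulr_natl. Qed.

Lemma mean_pairs_dist (R : numFieldType) (I J : eqType) (S : seq I) (T : seq J)
    (h : I -> J -> R) (g : I -> R) (e : R) :
  (0 < size S)%N -> (0 < size T)%N ->
  (forall x t, x \in S -> t \in T -> `|h x t - g x| <= e) ->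
  `|(size S * size T)%:R^-1 * \sum_(x <- S) \sum_(t <- T) h x t
    - (size S)%:R^-1 * \sum_(x <- S) g x| <= e.
Proof.
move=> S_gt0 T_gt0 hg.
have sS : (size S)%:R != 0 :> R by rewrite pnatr_eq0 -lt0n.
have sT : (size T)%:R != 0 :> R by rewrite pnatr_eq0 -lt0n.
have c_ge0 : 0 <= (size S * size T)%:R^-1 :> R by rewrite invr_ge0 ler0n.
have -> : (size S)%:R^-1 * \sum_(x <- S) g x =
          (size S * size T)%:R^-1 * \sum_(x <- S) \sum_(t <- T) g x.
  under [in RHS]eq_bigr do rewrite sum_const_seq.
  by rewrite -mulr_sumr natrM; field; apply/andP.
rewrite -mulrBr -sumrB normrM ger0_norm //.
apply: le_trans (_ : _ * \sum_(x <- S) \sum_(t <- T) e <= _).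
  apply: ler_wpM2l => //; apply: le_trans (ler_norm_sum _ _ _) _.
  rewrite big_seq [X in _ <= X]big_seq; apply: ler_sum => x xS.
  rewrite -sumrB; apply: le_trans (ler_norm_sum _ _ _) _.
  by rewrite big_seq [X in _ <= X]big_seq; apply: ler_sum => t tT; apply: hg.
under eq_bigr do rewrite sum_const_seq.
by rewrite sum_const_seq natrM [X in _ * X]mulrA mulKf ?mulf_neq0.
Qed.

Lemma cvg_dist_le (R : realType) (u : R^nat) (L c e : R) :
  u @ \oo --> L -> (\forall n \near \oo, `|u n - c| <= e) -> `|L - c| <= e.
Proof.
move=> uL ue.
have dist_cvg : (fun n => `|u n - c|) @ \oo --> `|L - c|.
  exact: cvg_norm (cvgB uL (cvg_cst c)).
rewrite -(cvg_lim _ dist_cvg) //; apply: limr_le ue.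
by apply/cvg_ex; exists `|L - c|.
Qed.

Lemma compact_uniform_continuity (R : realType) (T : pseudoMetricType R)
    (K : set T) (G : T -> R) :
  compact K -> {in K, continuous G} -> forall e : R, 0 < e ->
  exists2 del : R, 0 < del &
    forall x y, K x -> ball x del y -> `|G y - G x| < e.
Proof.
move=> cK cG e e0.
pose close del x := forall w, ball x del w -> `|G w - G x| < e.
have close_near x : K x -> \forall x' \near x & del \near 0^'+, close del x'.
  move=> Kx; have e20 : 0 < e / 2 by rewrite divr_gt0.
  have /nbhs_ballP [r /= r0 Gr] : \forall w \near x, `|G x - G w| < e / 2.
    by move/cvgrPdist_lt: (cG x (mem_set Kx)); apply.
  have r20 : 0 < r / 2 by rewrite divr_gt0.
  exists (ball x (r / 2), [set del | del < r / 2]) => /=.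
    split; first exact: nbhsx_ballx.
    apply/nbhs_ballP; exists (r / 2) => //= del + del0.
    by rewrite /ball /= sub0r normrN gtr0_norm.
  move=> [x' del] [/= xx' /= delr] w x'w.
  have Gx' : `|G x - G x'| < e / 2 by apply: Gr; apply: le_ball xx'; lra.
  have Gw : `|G x - G w| < e / 2.
    by apply: Gr; apply: le_ball (ball_triangle xx' x'w); lra.
  have := ler_distD (G x) (G w) (G x'); rewrite (distrC (G w) (G x)); lra.
(* compactness in near-covering form: one del serves every point of K *)
have near_close := (compact_near_coveringP K).1 cK R 0^'+ close
  (at_right_proper_filter 0) close_near.
have [r /= r0 Kr] := (nbhs_ballP _ _).1 near_close.
have r20 : 0 < r / 2 by rewrite divr_gt0.
exists (r / 2) => // x y Kx; apply: (Kr (r / 2)) => //.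
by rewrite /ball /= sub0r normrN gtr0_norm //; lra.
Qed.

Definition row_of_tup (R : realType) d (x : d.-tuple R) : 'rV[R]_d :=
  \row_i tnth x i.

Lemma row_of_tupK (R : realType) d : cancel (@row_of_tup R d) (@tup_of_row R d).
Proof. by move=> x; apply: eq_from_tnth => i; rewrite tnth_mktuple mxE. Qed.

Lemma cube_uniform_continuity (R : realType) d (g : d.-tuple R -> R) :
  continuous (g \o @tup_of_row R d) -> forall e : R, 0 < e ->
  exists2 del : R, 0 < del &
    forall x y : d.-tuple R, (forall i, 0 <= tnth x i <= 1) ->
      (forall i, `|tnth y i - tnth x i| < del) -> `|g y - g x| < e.
Proof.
move=> gc e e0.
have cube_compact := @rV_compact _ d _ (fun=> @segment_compact R 0 1).
have [del del0 gdel] :=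
  compact_uniform_continuity cube_compact (in1W gc) e0.
exists del => // x y x01 yx.
rewrite -(row_of_tupK x) -(row_of_tupK y); apply: gdel.
  by move=> i; rewrite mxE /= in_itv /=.
split=> // i j; rewrite (ord1 i) !mxE /ball /= distrC; exact: yx.
Qed.

Section TailPoints.
Variables (R : realType) (d : nat) (m : nat -> 'I_d -> nat).
Variable B : nat -> seq (d.-tuple nat).

Local Notation tup0 := [tuple (0 : R) | i < d].

(* Support of the tail factor of mu_(n0+k) beyond mu_n0; the digits keep their
   absolute scale (R_(n0+j) ... R_0)^-1. *)
Fixpoint tail_points (n0 k : nat) : seq (d.-tuple R) :=
  match k with
  | 0 => [:: tup0]
  | k'.+1 => [seq tup_add x (scaled_digit R m (n0 + k') b)
               | x <- tail_points n0 k', b <- B (n0 + k')]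
  end.

Lemma conv_points_tail n : conv_points R m B n = tail_points 0 n.
Proof. by elim: n => //= n ->; rewrite add0n. Qed.

Lemma tup_addA (x y z : d.-tuple R) :
  tup_add (tup_add x y) z = tup_add x (tup_add y z).
Proof. by apply: eq_from_tnth => i; rewrite !tnth_mktuple addrA. Qed.

Lemma tup_addr0 (x : d.-tuple R) : tup_add x tup0 = x.
Proof. by apply: eq_from_tnth => i; rewrite !tnth_mktuple addr0. Qed.

Lemma big_tail_points_addn (V : nmodType) (g : d.-tuple R -> V) n0 k :
  \sum_(x <- tail_points 0 (n0 + k)) g x =
  \sum_(x <- tail_points 0 n0) \sum_(t <- tail_points n0 k) g (tup_add x t).
Proof.
elim: k g => [|k IH] g.
  by rewrite addn0; apply: eq_bigr => x _; rewrite big_seq1 tup_addr0.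
rewrite addnS /= add0n big_allpairs_dep IH.
apply: eq_bigr => x _; rewrite big_allpairs_dep; apply: eq_bigr => t _.
by apply: eq_bigr => b _; rewrite tup_addA.
Qed.

Lemma size_tail_points_addn n0 k :
  size (tail_points 0 (n0 + k)) =
  (size (tail_points 0 n0) * size (tail_points n0 k))%N.
Proof.
elim: k => [|k IH]; first by rewrite addn0 muln1.
by rewrite addnS /= !size_allpairs add0n IH mulnA.
Qed.

Hypothesis mB : in_Dd m B.

Lemma size_tail_points_gt0 n0 k : (0 < size (tail_points n0 k))%N.
Proof.
elim: k => [|k IH] //=; rewrite size_allpairs muln_gt0 IH /=.
by have [_ [+ _]] := mB (n0 + k); case: (B (n0 + k)).
Qed.

Definition diag_prod n i := (\prod_(j < n) m j i)%N.

Lemma expn2_le_diag_prod n i : (2 ^ n <= diag_prod n i)%N.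
Proof.
elim: n => [|n IH]; first by rewrite /diag_prod big_ord0.
rewrite /diag_prod big_ord_recr /= expnSr leq_mul //.
by have [+ _] := mB n; apply.
Qed.

Lemma diag_prod_gt0 n i : (0 < diag_prod n i)%N.
Proof. by apply: leq_trans (expn2_le_diag_prod n i); rewrite expn_gt0. Qed.

Lemma tail_points_bound n0 k t : t \in tail_points n0 k -> forall i,
  0 <= tnth t i <= (diag_prod n0 i)%:R^-1 - (diag_prod (n0 + k) i)%:R^-1.
Proof.
elim: k t => [|k IH] t.
  by rewrite inE => /eqP -> i; rewrite addn0 subrr tnth_mktuple lexx.
move=> /allpairsP [[x b] /= [xP bB ->]] i.
have [m_ge2 [_ [_ B_digits]]] := mB (n0 + k).
have /forallP /(_ i) b_lt := allP B_digits b bB.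
move: (IH x xP i); rewrite !tnth_mktuple addnS /diag_prod big_ord_recr /=.
rewrite -/(diag_prod (n0 + k) i) natrM.
set p := (diag_prod (n0 + k) i)%:R; set q := (m (n0 + k) i)%:R.
set c := (tnth b i)%:R.
have p_gt0 : 0 < p by rewrite ltr0n diag_prod_gt0.
have q_gt0 : 0 < q by rewrite ltr0n (leq_trans _ (m_ge2 i)).
have c_ge0 : 0 <= c by rewrite ler0n.
have cq : c + 1 <= q by rewrite /c /q natr1 ler_nat.
move=> /andP [x_ge0 x_le]; apply/andP; split.
  by rewrite addr_ge0 // divr_ge0 // mulr_ge0 // ltW.
(* the new digit fills at most the gap (q - 1) / (p q) left at scale p *)
suff : c / (p * q) <= p^-1 - (p * q)^-1 by lra.
rewrite ler_pdivrMr ?mulr_gt0 //.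
have -> : (p^-1 - (p * q)^-1) * (p * q) = q - 1.
  by field; apply/andP; split; apply: lt0r_neq0.
lra.
Qed.

Lemma tail_points_le n0 k t : t \in tail_points n0 k -> forall i,
  0 <= tnth t i <= (diag_prod n0 i)%:R^-1.
Proof.
move=> /tail_points_bound tP i; have /andP [t_ge0 t_le] := tP i; rewrite t_ge0.
by apply: le_trans t_le _; rewrite lerBlDr lerDl invr_ge0 ler0n.
Qed.

Lemma int_mu_n_addn_dist (g : d.-tuple R -> R) n0 k (del e : R) :
  (2 ^ n0)%:R^-1 < del ->
  (forall x y : d.-tuple R, (forall i, 0 <= tnth x i <= 1) ->
     (forall i, `|tnth y i - tnth x i| < del) -> `|g y - g x| < e) ->
  `|int_mu_n m B (n0 + k) g - int_mu_n m B n0 g| <= e.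
Proof.
move=> n0_del g_unif.
rewrite /int_mu_n !conv_points_tail size_tail_points_addn big_tail_points_addn.
apply: mean_pairs_dist; rewrite ?size_tail_points_gt0 // => x t xP tP.
apply/ltW/g_unif => i.
  by have := tail_points_le xP i; rewrite /diag_prod big_ord0 invr1.
rewrite tnth_mktuple addrAC subrr add0r.
have /andP [t_ge0 t_le] := tail_points_le tP i.
rewrite ger0_norm //; apply: le_lt_trans n0_del.
apply: le_trans t_le _.
by rewrite lef_pV2 ?posrE ?ltr0n ?expn_gt0 ?diag_prod_gt0 // ler_nat expn2_le_diag_prod.
Qed.

Lemma weak_limit_dist (mu : probability (d.-tuple R) R) (g : d.-tuple R -> R)
    n0 (del e : R) :
  weak_limit m B mu -> bdd_cont_R g -> (2 ^ n0)%:R^-1 < del ->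
  (forall x y : d.-tuple R, (forall i, 0 <= tnth x i <= 1) ->
     (forall i, `|tnth y i - tnth x i| < del) -> `|g y - g x| < e) ->
  `|int_mu_n m B n0 g - Rintegral mu setT g| <= e.
Proof.
move=> mu_lim g_bc n0_del g_unif; rewrite distrC.
apply: cvg_dist_le (mu_lim g g_bc) _.
exists n0 => // n /= n0n; rewrite -(subnKC n0n).
exact: int_mu_n_addn_dist n0_del g_unif.
Qed.

End TailPoints.

Lemma exists_inv_expn2_lt (R : archiRealFieldType) (del : R) :
  0 < del -> exists2 n, (0 < n)%N & (2 ^ n)%:R^-1 < del.
Proof.
move=> del_gt0; exists (Num.truncn del^-1).+1 => //.
rewrite invf_plt ?posrE ?ltr0n ?expn_gt0 //.
by apply: lt_trans (truncnS_gt _) _; rewrite ltr_nat ltn_expl.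
Qed.

Unset Implicit Arguments.
Theorem lemma5p5 (R : realType) (d : nat) (f : d.-tuple R -> R[i]) :
  bdd_cont_C f ->
  forall eps : R, 0 < eps ->
  exists n0 : nat, (1 <= n0)%N /\
    forall (m : nat -> 'I_d -> nat) (B : nat -> seq (d.-tuple nat)),
      in_Dd m B ->
      forall mu : probability (d.-tuple R) R, weak_limit m B mu ->
        Normc.normc (int_mu_n m B n0 f - cintegral mu f) < eps.
Proof.
move=> f_bc eps eps_gt0.
have eps4_gt0 : 0 < eps / 4 by rewrite divr_gt0.
have [[_ cRe] [_ cIm]] := (bdd_cont_C_Re f_bc, bdd_cont_C_Im f_bc).
have [dRe dRe_gt0 Re_unif] := cube_uniform_continuity cRe eps4_gt0.
have [dIm dIm_gt0 Im_unif] := cube_uniform_continuity cIm eps4_gt0.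
have [|n0 n0_gt0] := @exists_inv_expn2_lt _ (Num.min dRe dIm).
  by rewrite lt_min dRe_gt0.
rewrite lt_min => /andP [n0_dRe n0_dIm].
exists n0; split=> // m B mB mu mu_lim.
have dist_Re := weak_limit_dist mB mu_lim (bdd_cont_C_Re f_bc) n0_dRe Re_unif.
have dist_Im := weak_limit_dist mB mu_lim (bdd_cont_C_Im f_bc) n0_dIm Im_unif.
rewrite int_mu_n_complex /cintegral.
apply: le_lt_trans (normc_complex_le (_ - _) (_ - _)) _.
lra.
Qed.
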